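(* For every integer $n \geq 8$, $h(n,5) \leq \frac{7n + c(n \bmod 6)}{6}$, where $c(0)=0$, $c(1)=35$, $c(2)=16$, $c(3)=27$, $c(4)=8$, $c(5)=28$.
   Context: All graphs are finite and simple. A degree monotone path in a graph $G$ is a path $v_1v_2\ldots v_m$ such that $\deg(v_1)\le \cdots\le \deg(v_m)$ or $\deg(v_1)\ge \cdots\ge \deg(v_m)$; its length is its number of vertices. $mp(G)$ denotes the maximum length of a degree monotone path in $G$. For a pair $e$ of non-adjacent vertices, $G+e$ is $G$ with the edge $e$ added. A graph $G$ is $k$-saturated if $mp(G)\le k-1$ and $mp(G+e)\ge k$ for every pair $e$ of non-adjacent vertices of $G$ (so $K_m$ is $k$-saturated for $m\le k-1$). $h(n,k)$ is the minimum number of edges of a $k$-saturated graph on $n$ vertices. *)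

From mathcomp Require Import all_boot.
Set Implicit Arguments. Unset Strict Implicit. Unset Printing Implicit Defensive.

Section Graphs.
Variable T : finType.

Definition simple_graph (g : rel T) : Prop := symmetric g /\ irreflexive g.

Definition deg (g : rel T) (x : T) : nat := #|[set y | g x y]|.

Definition edges (g : rel T) : {set {set T}} :=
  [set [set p.1; p.2] | p in [set p : T * T | g p.1 p.2]].

Definition dm_path (g : rel T) (s : seq T) : bool :=
  [&& uniq s,
      (if s is x :: s' then path g x s' else true) &
      (sorted leq (map (deg g) s) || sorted geq (map (deg g) s))].

Definition mp (g : rel T) : nat :=
  \max_(m < #|T|.+1 | [exists t : m.-tuple T, dm_path g t]) m.

Definition add_edge (g : rel T) (x y : T) : rel T :=
  fun a b => [|| g a b, (a == x) && (b == y) | (a == y) && (b == x)].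

Definition saturated (k : nat) (g : rel T) : Prop :=
  mp g <= k.-1 /\
  forall x y : T, x != y -> ~~ g x y -> k <= mp (add_edge g x y).

End Graphs.

Definition c_const (r : nat) : nat :=
  match r with
  | 0 => 0 | 1 => 35 | 2 => 16 | 3 => 27 | 4 => 8 | _ => 28
  end.

From mathcomp Require Import all_boot zify.
Set Implicit Arguments. Unset Strict Implicit. Unset Printing Implicit Defensive.

(* The graph is a small core (copies of K4 and, when n mod 6 is odd, one K5
   minus an edge) together with disjoint copies of a 6-vertex gadget with 7
   edges, which yields the edge count.  A path lies in a single component and a
   path of G + e in at most two, all gadget components are isomorphic, and the
   degrees inside a component do not depend on the rest of the graph; hence
   saturation reduces to the core plus two gadgets, a graph on at most 25
   vertices.  These graphs, and the smaller ones, are checked by a verified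
   exhaustive search for degree monotone paths. *)

Definition monotone_path (A : eqType) (e : rel A) (d : A -> nat) (s : seq A) :=
  [&& uniq s, sorted e s & sorted leq (map d s) || sorted geq (map d s)].

Section MonotonePaths.
Variables (A B : eqType) (e : rel A) (d : A -> nat).

Lemma monotone_path_map (e' : rel B) (d' : B -> nat) (h : A -> B) s :
  injective h -> (forall a b, e' (h a) (h b) = e a b) -> (forall a, d' (h a) = d a) ->
  monotone_path e' d' (map h s) = monotone_path e d s.
Proof.
move=> h_inj he hd; rewrite /monotone_path (map_inj_uniq h_inj) sorted_map.
by rewrite -map_comp (eq_map hd) (eq_sorted (_ : relpre h e' =2 e)).
Qed.

Lemma monotone_path_take k s : monotone_path e d s -> monotone_path e d (take k s).
Proof.
case/and3P=> s_uniq s_sorted d_sorted; rewrite /monotone_path take_uniq //.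
by rewrite take_sorted // map_take; case/orP: d_sorted => /(take_sorted k) ->; rewrite ?orbT.
Qed.

Lemma monotone_path_rev s : symmetric e -> monotone_path e d (rev s) = monotone_path e d s.
Proof.
move=> e_sym; rewrite /monotone_path rev_uniq map_rev !rev_sorted orbC.
by rewrite (eq_sorted (_ : (fun x y => e y x) =2 e)).
Qed.

End MonotonePaths.

Lemma dm_pathE (T : finType) (g : rel T) : dm_path g =1 monotone_path g (deg g).
Proof. by []. Qed.

Section FiniteGraphs.
Variable T : finType.
Implicit Types (g : rel T) (s : seq T).

Lemma dm_path_size_le_mp g s : dm_path g s -> size s <= mp g.
Proof.
move=> s_dm; have /and3P [s_uniq _ _] := s_dm.
have s_small : size s < #|T|.+1 by rewrite ltnS -(card_uniqP s_uniq) max_card.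
apply: (@leq_bigmax_cond _ _ _ (Ordinal s_small)).
by apply/existsP; exists (in_tuple s).
Qed.

Lemma mp_le g k : (forall s, dm_path g s -> size s <= k) -> mp g <= k.
Proof.
move=> dm_le; apply/bigmax_leqP => i /existsP [t t_dm].
by rewrite -(size_tuple t); apply: dm_le.
Qed.

Lemma eq_dm_path g g' : g =2 g' -> dm_path g =1 dm_path g'.
Proof.
move=> eq_g s; rewrite !dm_pathE -{1}[s]map_id.
apply: monotone_path_map => // a; apply: eq_card => b; by rewrite !inE eq_g.
Qed.

End FiniteGraphs.

Definition component_embedding (T0 T : finType) (g0 : rel T0) (g : rel T) (phi : T0 -> T) :=
  [/\ injective phi, forall a b, g (phi a) (phi b) = g0 a b
    & forall a v, g (phi a) v -> exists b, v = phi b].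

Section ComponentEmbedding.
Variables (T0 T : finType) (g0 : rel T0) (g : rel T) (phi : T0 -> T).
Hypothesis phi_emb : component_embedding g0 g phi.

Lemma deg_component_embedding a : deg g (phi a) = deg g0 a.
Proof.
have [phi_inj phi_adj phi_closed] := phi_emb.
rewrite /deg; suff -> : [set v | g (phi a) v] = phi @: [set b | g0 a b] by rewrite card_imset.
apply/setP => v; rewrite inE; apply/idP/imsetP => [gav | [b]].
  by have [b v_eq] := phi_closed a v gav; exists b; rewrite // inE -phi_adj -v_eq.
by rewrite inE -phi_adj => gab ->.
Qed.

Lemma dm_path_component_embedding s : dm_path g (map phi s) = dm_path g0 s.
Proof.
have [phi_inj phi_adj _] := phi_emb.
by rewrite !dm_pathE; apply: monotone_path_map => // a; apply: deg_component_embedding.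
Qed.

Lemma path_component_embedding a s : path g (phi a) s -> exists s0, s = map phi s0.
Proof.
have [_ _ phi_closed] := phi_emb.
elim: s a => [|v s IHs] a /=; first by exists [::].
case/andP=> /phi_closed [b ->] /IHs [s0 ->]; by exists (b :: s0).
Qed.

Lemma mp_component_embedding : mp g0 <= mp g.
Proof.
apply/bigmax_leqP => i /existsP [t t_dm]; rewrite -(size_tuple t) -(size_map phi).
by apply: dm_path_size_le_mp; rewrite dm_path_component_embedding.
Qed.

Lemma component_embedding_add_edge x y :
  component_embedding (add_edge g0 x y) (add_edge g (phi x) (phi y)) phi.
Proof.
have [phi_inj phi_adj phi_closed] := phi_emb.
split=> // [a b|a v]; first by rewrite /add_edge phi_adj !(inj_eq phi_inj).
by case/or3P=> [/phi_closed //|/andP [_ /eqP ->]|/andP [_ /eqP ->]]; eexists.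
Qed.

End ComponentEmbedding.

Lemma saturated_cover (T0 T : finType) (g0 : rel T0) (g : rel T) k :
  saturated k g0 ->
  (forall x y, exists2 phi, component_embedding g0 g phi &
     exists x0 y0, x = phi x0 /\ y = phi y0) ->
  saturated k g.
Proof.
move=> [mp_g0 sat_g0] cover; split.
  apply: mp_le => [[|v s] s_dm] //; have [phi phi_emb [a [_ [v_eq _]]]] := cover v v.
  have /and3P [_ s_path _] := s_dm; rewrite v_eq in s_path s_dm.
  have [s0 s_eq] := path_component_embedding phi_emb s_path.
  rewrite s_eq -map_cons (dm_path_component_embedding phi_emb) in s_dm.
  by rewrite v_eq s_eq -map_cons size_map (leq_trans (dm_path_size_le_mp s_dm)).
move=> x y x_neq_y not_gxy; have [phi phi_emb [x0 [y0 [x_eq y_eq]]]] := cover x y.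
have [_ phi_adj _] := phi_emb; rewrite x_eq y_eq phi_adj in x_neq_y not_gxy *.
have x0_neq_y0 : x0 != y0 by apply: contraNneq x_neq_y => ->.
exact: leq_trans (sat_g0 _ _ x0_neq_y0 not_gxy)
  (mp_component_embedding (component_embedding_add_edge phi_emb x0 y0)).
Qed.

Definition ord_graph n (f : rel nat) : rel 'I_n := fun a b => f a b.
Arguments ord_graph : clear implicits.

Definition nat_deg (f : rel nat) n v := count (f v) (iota 0 n).

Definition nat_add_edge (f : rel nat) x y : rel nat :=
  fun a b => [|| f a b, (a == x) && (b == y) | (a == y) && (b == x)].

Section OrdGraph.
Variables (n : nat) (f : rel nat).

Lemma deg_ord_graph (a : 'I_n) : deg (ord_graph n f) a = nat_deg f n a.
Proof.
rewrite /deg -sum1_card (eq_bigl (fun b : 'I_n => f a b)) => [|b]; last by rewrite inE.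
by rewrite -(big_mkord (f a) (fun _ => 1)) sum1_count /index_iota subn0.
Qed.

Lemma dm_path_ord_graph (s : seq 'I_n) :
  dm_path (ord_graph n f) s = monotone_path f (nat_deg f n) (map val s).
Proof.
rewrite dm_pathE; symmetry; apply: monotone_path_map val_inj _ _ => // a.
exact/esym/deg_ord_graph.
Qed.

Lemma add_edge_ord_graph (x y : 'I_n) :
  add_edge (ord_graph n f) x y =2 ord_graph n (nat_add_edge f x y).
Proof. by []. Qed.

Lemma ord_seqP (t : seq nat) :
  reflect (exists s : seq 'I_n, map val s = t) (all (gtn n) t).
Proof.
apply: (iffP idP) => [t_small | [s <-]]; last by apply/allP => _ /mapP [a _ ->]; apply: ltn_ord.
exists (pmap insub t); rewrite (pmap_filter (insubK _)).
by apply/all_filterP; rewrite (eq_all (isSome_insub _)).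
Qed.

End OrdGraph.

Lemma nat_add_edge_sym f x y : symmetric f -> symmetric (nat_add_edge f x y).
Proof.
move=> f_sym a b; rewrite /nat_add_edge f_sym (andbC (b == x)) (andbC (b == y)).
by rewrite (orbC ((a == y) && _)).
Qed.

Section MonotoneSearch.
Variables (f : rel nat) (d : nat -> nat) (n : nat) (nbrs : nat -> seq nat).
Hypothesis nbrsP : forall a b, a < n -> b < n -> f a b -> a \in nbrs b.

Definition climbing s := [&& all (gtn n) s, uniq s, sorted f s & sorted leq (map d s)].

Definition can_prepend a s :=
  [&& a < n, a \notin s & if s is b :: _ then f a b && (d a <= d b) else true].

Lemma climbing_cons a s : climbing (a :: s) = can_prepend a s && climbing s.
Proof.
rewrite /climbing /can_prepend /=; case: s => [|b s] /=; first by rewrite !andbT.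
by rewrite -!andbA; do !bool_congr.
Qed.

Lemma climbing_catr t s : climbing (t ++ s) -> climbing s.
Proof. by elim: t => //= a t IHt; rewrite climbing_cons => /andP [_ /IHt]. Qed.

Definition candidates s := if s is b :: _ then nbrs b else iota 0 n.

Lemma candidatesP a s : climbing s -> can_prepend a s -> a \in candidates s.
Proof.
case: s => [|b s] /and4P [s_small _ _ _] /and3P [a_lt _ fab].
  by rewrite mem_iota add0n a_lt.
by case/andP: fab => fab _; apply: nbrsP => //; case/andP: s_small.
Qed.

(* [if] rather than [&&] (here and in [saturated_check]): under the
   call-by-value [vm_compute] the recursive call would otherwise be evaluated
   for every candidate. *)
Fixpoint extendable k s :=
  if k is k'.+1 then
    has (fun a => if can_prepend a s then extendable k' (a :: s) else false) (candidates s)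
  else true.

Lemma extendableP k s :
  climbing s -> reflect (exists2 t, size t = k & climbing (t ++ s)) (extendable k s).
Proof.
elim: k s => [|k IHk] s s_climb /=; first by apply: ReflectT; exists [::].
apply: (iffP hasP) => [[a _] | [t t_size t_climb]].
  case a_ok: (can_prepend a s) => // /IHk [|t t_size t_climb].
    by rewrite climbing_cons a_ok.
  by exists (rcons t a); rewrite ?size_rcons ?t_size ?cat_rcons.
case/lastP: t t_size t_climb => // t a; rewrite size_rcons cat_rcons => -[t_size] t_climb.
have /andP [a_ok as_climb] : can_prepend a s && climbing s.
  by rewrite -climbing_cons (climbing_catr t_climb).
exists a; first exact: candidatesP.
by rewrite a_ok; apply/IHk; [rewrite climbing_cons a_ok | exists t].
Qed.

End MonotoneSearch.

Definition degrees f n := [seq nat_deg f n v | v <- iota 0 n].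

Definition neighbours (f : rel nat) n := [seq [seq a <- iota 0 n | f a b] | b <- iota 0 n].

Lemma mem_neighbours (f : rel nat) n a b :
  a < n -> b < n -> f a b -> a \in nth [::] (neighbours f n) b.
Proof.
move=> a_lt b_lt fab; rewrite (nth_map 0) ?size_iota // nth_iota //.
by rewrite mem_filter fab mem_iota.
Qed.

(* Reversing a path turns nonincreasing degrees into nondecreasing ones, so the
   search only builds climbing paths. *)
Definition has_monotone_path f n k :=
  extendable f (nth 0 (degrees f n)) n (nth [::] (neighbours f n)) k [::].

Lemma has_monotone_pathP f n k : symmetric f ->
  reflect (exists t, [/\ size t = k, all (gtn n) t & monotone_path f (nat_deg f n) t])
          (has_monotone_path f n k).
Proof.
move=> f_sym; have degreesE t :
    all (gtn n) t -> map (nth 0 (degrees f n)) t = map (nat_deg f n) t.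
  move/allP=> t_small; apply/eq_in_map => v /t_small v_small.
  by rewrite (nth_map 0) ?size_iota ?nth_iota.
apply: (iffP (extendableP (@mem_neighbours f n) k (isT : climbing _ _ n [::])))
  => [[t t_size]|[t [t_size t_small]]].
  rewrite cats0 => /and4P [t_small t_uniq t_sorted]; rewrite degreesE // => d_sorted.
  by exists t; rewrite /monotone_path t_uniq t_sorted d_sorted.
move=> t_mono; have [u [u_size u_small u_mono d_sorted]] : exists u,
    [/\ size u = k, all (gtn n) u, monotone_path f (nat_deg f n) u
       & sorted leq (map (nat_deg f n) u)].
  case/and3P: (t_mono) => _ _ /orP [d_sorted | d_sorted]; first by exists t.
  by exists (rev t); rewrite size_rev all_rev monotone_path_rev // map_rev rev_sorted.
case/and3P: u_mono => u_uniq u_sorted _.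
by exists u; rewrite // cats0 /climbing degreesE // u_small u_uniq u_sorted d_sorted.
Qed.

Definition saturated_check f n k :=
  ~~ has_monotone_path f n k &&
  all (fun x => all (fun y =>
    if (x == y) || f x y then true else has_monotone_path (nat_add_edge f x y) n k)
  (iota 0 n)) (iota 0 n).

Lemma saturated_checkP f n k :
  symmetric f -> saturated_check f n k -> saturated k (ord_graph n f).
Proof.
move=> f_sym /andP [/(has_monotone_pathP _ _ f_sym) no_path /allP add_path]; split.
  apply: mp_le => s s_dm; suff : size s < k by lia.
  rewrite ltnNge; apply: contra_notN no_path => k_le; exists (map val (take k s)).
  rewrite size_map size_take_min (minn_idPl k_le) -dm_path_ord_graph dm_pathE.
  by split=> //; [apply/ord_seqP; eexists | apply: monotone_path_take].
move=> x y /negbTE x_neq_y /negbTE not_fxy.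
have := add_path x; rewrite mem_iota add0n ltn_ord => /(_ isT) /allP /(_ y).
rewrite mem_iota add0n ltn_ord [_ == _]x_neq_y [f _ _]not_fxy => /(_ isT).
case/(has_monotone_pathP _ _ (nat_add_edge_sym x y f_sym)).
move=> t [t_size /ord_seqP [s s_val] t_mono].
rewrite -t_size -s_val size_map dm_path_size_le_mp //.
by rewrite (eq_dm_path (add_edge_ord_graph f x y)) dm_path_ord_graph s_val.
Qed.

(* Precomputing the adjacency table makes the search fast enough for [vm_compute]. *)
Definition tabulate (f : rel nat) n : rel nat :=
  let t := [seq [seq f a b | b <- iota 0 n] | a <- iota 0 n] in
  fun a b => nth false (nth [::] t a) b.

Lemma tabulateE f n a b : tabulate f n a b = [&& a < n, b < n & f a b].
Proof.
rewrite /tabulate; case: (ltnP a n) => [a_lt | a_ge]; last first.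
  by rewrite (nth_default [::]) ?size_map ?size_iota ?nth_nil.
rewrite (nth_map 0) ?size_iota // nth_iota //; case: (ltnP b n) => [b_lt | b_ge].
  by rewrite (nth_map 0) ?size_iota // nth_iota.
by rewrite (nth_default false) ?size_map ?size_iota.
Qed.

Lemma saturated_check_tabulateP f n k : symmetric f ->
  saturated_check (tabulate f n) n k -> saturated k (ord_graph n f).
Proof.
move=> f_sym check; have tab_sym : symmetric (tabulate f n).
  by move=> a b; rewrite !tabulateE f_sym andbCA.
apply: (saturated_cover (saturated_checkP tab_sym check)) => x y.
exists id; last by exists x, y.
by split=> // [a b | a v _]; [rewrite /ord_graph tabulateE !ltn_ord | exists v].
Qed.

Definition pair_count (f : rel nat) N := \sum_(0 <= b < N) \sum_(0 <= a < b) f a b.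

Lemma card_edges_ord_graph f n :
  symmetric f -> irreflexive f -> #|edges (ord_graph n f)| <= pair_count f n.
Proof.
move=> f_sym f_irr; set lt_pairs := [set p : 'I_n * 'I_n | (p.1 < p.2) && f p.1 p.2].
have -> : pair_count f n = #|lt_pairs|.
  rewrite -sum1_card big_mkcond.
  rewrite (eq_bigr (fun p : 'I_n * 'I_n => ((p.1 < p.2) && f p.1 p.2 : nat))) => [|p _].
    2: by rewrite inE; case: (_ && _).
  rewrite -(pair_bigA _ (fun a b : 'I_n => ((a < b) && f a b : nat))) /=.
  rewrite exchange_big /pair_count big_mkord; apply: eq_bigr => b _.
  rewrite (big_nat_widen _ _ _ _ _ (ltnW (ltn_ord b))) big_mkcondr big_mkord /=.
  by apply: eq_bigr => a _; case: (a < b).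
rewrite (leq_trans _ (leq_imset_card (fun p : 'I_n * 'I_n => [set p.1; p.2]) lt_pairs)) //.
apply/subset_leq_card/subsetP => _ /imsetP [[a b] /[!inE] /= fab ->].
apply/imsetP; case: (ltngtP a b) => [a_lt_b | b_lt_a | a_eq_b].
- by exists (a, b); rewrite ?inE ?a_lt_b.
- by exists (b, a); rewrite ?inE /= ?b_lt_a 1?f_sym // setUC.
- by move: fab; rewrite /ord_graph a_eq_b f_irr.
Qed.

Lemma eq_pair_count f f' N :
  (forall a b, a < b < N -> f a b = f' a b) -> pair_count f N = pair_count f' N.
Proof.
move=> eq_f; apply: eq_big_nat => b /andP [_ b_lt]; apply: eq_big_nat => a /andP [_ a_lt].
by rewrite eq_f // a_lt.
Qed.

Lemma pair_count_add f N k : (forall a b, a < N <= b -> f a b = false) ->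
  pair_count f (N + k) = pair_count f N + pair_count (fun a b => f (N + a) (N + b)) k.
Proof.
move=> no_cross; elim: k => [|k IHk]; first by rewrite addn0 [pair_count _ 0]big_geq ?addn0.
rewrite addnS /pair_count !big_nat_recr //= -!/(pair_count _ _) IHk -addnA; congr (_ + (_ + _)).
rewrite (big_cat_nat _ (leq_addr k N)) //= big1_seq ?add0n => [|a /andP [_]].
  by rewrite -{1}(add0n N) big_addn addKn; apply: eq_big_nat => a _; rewrite addnC.
by rewrite mem_index_iota => /andP [_ a_lt]; rewrite no_cross // a_lt leq_addr.
Qed.

(* The vertices below [core_size r] form the core: [core_k4s r] copies of K4
   followed by a clique on the remaining core vertices, minus the edge between
   the last two when r is odd.  The other vertices form consecutive blocks of
   six, each a copy of the gadget. *)
Definition core_size r := nth 0 [:: 0; 13; 8; 9; 4; 5] r.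
Definition core_k4s r := nth 0 [:: 0; 2; 2; 1; 1; 0] r.
Definition core_edges r := nth 0 [:: 0; 21; 12; 15; 6; 9] r.

Definition block r a := if a < core_size r then 0 else ((a - core_size r) %/ 6).+1.
Definition offset r a := if a < core_size r then a else (a - core_size r) %% 6.

Definition core_comp r i := if i < 4 * core_k4s r then i %/ 4 else core_k4s r.
Definition core_adj r i j :=
  [&& i != j, core_comp r i == core_comp r j &
      ~~ odd r || (minn i j < core_size r - 2)].

Definition gadget_edges := [:: (0, 1); (0, 2); (0, 3); (1, 4); (1, 5); (2, 4); (3, 5)].
Definition gadget_adj i j := ((i, j) \in gadget_edges) || ((j, i) \in gadget_edges).

Definition sat_adj r a b :=
  (block r a == block r b) &&
  if block r a == 0 then core_adj r (offset r a) (offset r b)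
  else gadget_adj (offset r a) (offset r b).

Definition sat_graph n := ord_graph n (sat_adj (n %% 6)).
Arguments sat_graph : clear implicits.

Lemma sat_adj_sym r : symmetric (sat_adj r).
Proof.
move=> a b; rewrite /sat_adj eq_sym; case: eqP => //= ->.
by rewrite /core_adj /gadget_adj (eq_sym (offset r a)) (eq_sym (core_comp r _)) minnC
  (orbC ((offset r a, _) \in _)).
Qed.

Lemma sat_adj_irr r : irreflexive (sat_adj r).
Proof.
move=> a; rewrite /sat_adj eqxx /core_adj eqxx /gadget_adj orbb /=.
by case: ifP => // _; case: (offset r a) => [|[|[|[|[|[|i]]]]]].
Qed.

Lemma block_lt r m a b : a < core_size r + 6 * m <= b -> block r a < block r b.
Proof. by rewrite /block; case: ifP; case: ifP; lia. Qed.

Lemma block_shift r m a : a < 6 -> block r (core_size r + 6 * m + a) = m.+1.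
Proof. by rewrite /block; case: ifP; lia. Qed.

Lemma offset_shift r m a : a < 6 -> offset r (core_size r + 6 * m + a) = a.
Proof. by rewrite /offset; case: ifP; lia. Qed.

Lemma pair_count_gadget : pair_count gadget_adj 6 = 7.
Proof. by rewrite /pair_count unlock. Qed.

Lemma pair_count_sat_adj r m :
  r < 6 -> pair_count (sat_adj r) (core_size r + 6 * m) = core_edges r + 7 * m.
Proof.
move=> r_lt6; elim: m => [|m IHm].
  rewrite !muln0 !addn0.
  by case: r r_lt6 => [|[|[|[|[|[|]]]]]] // _; rewrite /pair_count unlock.
rewrite mulnSr addnA pair_count_add => [|a b]; last first.
  by move=> /block_lt lt_block; rewrite /sat_adj (ltn_eqF lt_block).
rewrite IHm (@eq_pair_count _ gadget_adj) => [|a b /andP [a_lt_b b_lt]].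
  by rewrite pair_count_gadget mulnSr addnA.
have a_lt : a < 6 := ltn_trans a_lt_b b_lt.
by rewrite /sat_adj !block_shift ?offset_shift ?eqxx.
Qed.

Lemma core_size_decomp n : 8 <= n -> exists m, n = core_size (n %% 6) + 6 * m.
Proof.
move=> n_ge8; exists (n %/ 6 - core_size (n %% 6) %/ 6).
have := ltn_pmod n (isT : 0 < 6); have [r r_eq] : exists r, n %% 6 = r by eexists.
by rewrite r_eq; case: r r_eq => [|[|[|[|[|[|r]]]]]] // r_eq _; rewrite /core_size /=; lia.
Qed.

Lemma card_edges_sat_graph n :
  8 <= n -> 6 * #|edges (sat_graph n)| <= 7 * n + c_const (n %% 6).
Proof.
move=> /core_size_decomp [m n_eq]; rewrite /sat_graph.
move: (n %% 6) (ltn_pmod n (isT : 0 < 6)) n_eq => r r_lt6 n_eq; subst n.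
have := card_edges_ord_graph (core_size r + 6 * m) (sat_adj_sym r) (sat_adj_irr r).
rewrite pair_count_sat_adj // => card_le; rewrite (leq_trans (leq_mul (leqnn 6) card_le)) //.
by case: r r_lt6 {card_le} => [|[|[|[|[|[|r]]]]]] // _;
   rewrite /core_edges /core_size /c_const /=; lia.
Qed.

Ltac case_ifs := repeat match goal with
  | |- context [if ?c then _ else _] =>
      lazymatch c with
      | context [if _ then _ else _] => fail
      | _ => let H := fresh in case H : c
      end
  end.

Section BlockEmbedding.
Variables (r m k1 k2 : nat).
Hypotheses (k1_lt : k1 < m) (k2_lt : k2 < m) (k1_neq_k2 : k1 != k2).
Local Notation c := (core_size r).

Definition embed_blocks a :=
  if a < c then a else if a < c + 6 then c + 6 * k1 + (a - c) else c + 6 * k2 + (a - c - 6).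

Definition unembed_blocks v :=
  if v < c then v else if (v - c) %/ 6 == k1 then c + (v - c) %% 6 else c + 6 + (v - c) %% 6.

Lemma embed_blocks_lt a : a < c + 12 -> embed_blocks a < c + 6 * m.
Proof. by rewrite /embed_blocks; case_ifs; lia. Qed.

Lemma embed_blocks_inj a b :
  a < c + 12 -> b < c + 12 -> embed_blocks a = embed_blocks b -> a = b.
Proof. by move: k1_neq_k2 => /eqP; rewrite /embed_blocks; case_ifs; lia. Qed.

Lemma block_embed_blocks a :
  a < c + 12 -> block r (embed_blocks a) =
  if block r a == 0 then 0 else if block r a == 1 then k1.+1 else k2.+1.
Proof. by rewrite /embed_blocks /block; case_ifs; lia. Qed.

Lemma offset_embed_blocks a : a < c + 12 -> offset r (embed_blocks a) = offset r a.
Proof. by rewrite /embed_blocks /offset; case_ifs; lia. Qed.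

Lemma sat_adj_embed_blocks a b : a < c + 12 -> b < c + 12 ->
  sat_adj r (embed_blocks a) (embed_blocks b) = sat_adj r a b.
Proof.
move=> a_lt b_lt; rewrite /sat_adj !block_embed_blocks ?offset_embed_blocks //.
have block_le2 v : v < c + 12 -> block r v <= 2 by rewrite /block; case_ifs; lia.
move: (block_le2 a a_lt) (block_le2 b b_lt) (negbTE k1_neq_k2).
by case: (block r a) => [|[|[|]]] //; case: (block r b) => [|[|[|]]] //= _ _ k12;
   rewrite !eqSS ?eqxx ?k12 // eq_sym k12.
Qed.

Definition in_blocks v := (v < c) || ((v - c) %/ 6 \in [:: k1; k2]).

Lemma unembed_blocksK v : in_blocks v ->
  unembed_blocks v < c + 12 /\ embed_blocks (unembed_blocks v) = v.
Proof.
move: k1_neq_k2 => /eqP; rewrite /in_blocks /unembed_blocks /embed_blocks !inE.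
by case_ifs; lia.
Qed.

Lemma in_blocks_sat_adj a v : a < c + 12 -> sat_adj r (embed_blocks a) v -> in_blocks v.
Proof.
move=> a_lt /andP [/eqP block_eq _]; move: block_eq; rewrite block_embed_blocks //.
rewrite /in_blocks /block !inE; case_ifs; lia.
Qed.

Definition embed_ord (a : 'I_(c + 12)) : 'I_(c + 6 * m) :=
  Ordinal (embed_blocks_lt (ltn_ord a)).

Lemma embed_ordP (v : 'I_(c + 6 * m)) : in_blocks v -> exists a, v = embed_ord a.
Proof.
case/unembed_blocksK=> v'_lt v'K; exists (Ordinal v'_lt); exact: val_inj.
Qed.

Lemma component_embedding_blocks :
  component_embedding (ord_graph (c + 12) (sat_adj r)) (ord_graph (c + 6 * m) (sat_adj r))
                      embed_ord.
Proof.
split=> [a b /(congr1 val) /embed_blocks_inj ab_eq | a b | a v /in_blocks_sat_adj v_in].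
- by apply: val_inj; apply: ab_eq.
- exact: sat_adj_embed_blocks.
- exact/embed_ordP/v_in.
Qed.

End BlockEmbedding.

Lemma cover_two_blocks m j1 j2 : 1 < m -> j1 < m -> j2 < m ->
  exists k1 k2, [/\ k1 < m, k2 < m, k1 != k2, j1 \in [:: k1; k2] & j2 \in [:: k1; k2]].
Proof.
move=> m_gt1 j1_lt j2_lt; have [<- | j1_neq] := eqVneq j1 j2; last first.
  by exists j1, j2; rewrite !inE !eqxx orbT.
exists j1, (j1 == 0 : nat); rewrite !inE eqxx; split=> //; case: eqP => /=; lia.
Qed.

Lemma saturated_sat_adj_blocks r m k : 1 < m ->
  saturated k (ord_graph (core_size r + 12) (sat_adj r)) ->
  saturated k (ord_graph (core_size r + 6 * m) (sat_adj r)).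
Proof.
move=> m_gt1 sat_base; apply: (saturated_cover sat_base) => x y.
have block_lt (v : 'I_(core_size r + 6 * m)) : (v - core_size r) %/ 6 < m.
  by have := ltn_ord v; lia.
have [k1 [k2 [k1_lt k2_lt k1_neq x_in y_in]]] := cover_two_blocks m_gt1 (block_lt x) (block_lt y).
exists (embed_ord k1_lt k2_lt k1_neq); first exact: component_embedding_blocks.
have [a ->] := embed_ordP k1_lt k2_lt k1_neq (introT orP (or_intror x_in)).
have [b ->] := embed_ordP k1_lt k2_lt k1_neq (introT orP (or_intror y_in)).
by exists a, b.
Qed.

Lemma saturated_check_two_blocks :
  all (fun r => all (fun m => let n := core_size r + 6 * m in
    (n < 8) || saturated_check (tabulate (sat_adj r) n) n 5) (iota 0 3)) (iota 0 6).
Proof. by vm_compute. Qed.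

Lemma saturated_sat_adj_small r m : r < 6 -> m <= 2 -> 8 <= core_size r + 6 * m ->
  saturated 5 (ord_graph (core_size r + 6 * m) (sat_adj r)).
Proof.
move=> r_lt6 m_le2 n_ge8; apply: saturated_check_tabulateP; first exact: sat_adj_sym.
move/allP: saturated_check_two_blocks => /(_ r); rewrite mem_iota => /(_ r_lt6) /allP /(_ m).
by rewrite mem_iota ltnS m_le2 => /(_ isT); rewrite /= ltnNge n_ge8.
Qed.

Lemma saturated_sat_graph n : 8 <= n -> saturated 5 (sat_graph n).
Proof.
move=> n_ge8; have [m n_eq] := core_size_decomp n_ge8; rewrite /sat_graph.
move: (n %% 6) (ltn_pmod n (isT : 0 < 6)) n_eq => r r_lt6 n_eq; subst n.
have [m_le2 | m_gt2] := leqP m 2; first exact: saturated_sat_adj_small.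
apply: saturated_sat_adj_blocks (ltnW m_gt2) (@saturated_sat_adj_small r 2 r_lt6 _ _) => //.
by case: r r_lt6 {n_ge8} => [|[|[|[|[|[|r]]]]]].
Qed.

Theorem proposition2p8 (n : nat) : 8 <= n ->
  exists g : rel 'I_n,
    simple_graph g /\ saturated 5 g /\
    6 * #|edges g| <= 7 * n + c_const (n %% 6).
Proof.
move=> n_ge8; exists (sat_graph n); split.
  by split=> [a b | a]; [apply: sat_adj_sym | apply: sat_adj_irr].
by split; [apply: saturated_sat_graph | apply: card_edges_sat_graph].
Qed.
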